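(* Let $g:\{0,1,2,3\}^*\to\{0,1,2,3\}^*$ be the morphism $g(0)=01$, $g(1)=20$, $g(2)=23$, $g(3)=02$, and $\tau$ the coding $\tau(0)=2$, $\tau(1)=1$, $\tau(2)=0$, $\tau(3)=1$; let $\mathbf{vtm}=\tau(g^\omega(0))$. Let $\eta:\{0,1,2\}^*\to\{0,1\}^*$ be the morphism $\eta(0)=00011101$, $\eta(1)=001110001101$, $\eta(2)=0011000111001101$. Then the infinite word $\eta(\mathbf{vtm})$ contains only three distinct squares: $0^2$, $1^2$, and $(10)^2$. It is $2$-automatic and can be generated by a $2$-automaton with $27$ states (so its weight is $2\cdot 27=54$).
   Context: A square is a nonempty word $xx$; ''containing'' means as a factor. $g^\omega(0)$ denotes the infinite fixed point of $g$ starting with $0$. A $2$-automaton (DFAO) with $s$ states generates $(a_n)_{n\ge0}$ if on input the base-$2$ representation of $n$ (most significant digit first) it outputs $a_n$; a word is $2$-automatic if some such automaton generates it; equivalently it is the image under a coding of a fixed point of a $2$-uniform morphism on $s$ letters. The weight of such a word is $2\cdot s$. *)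

(* Infinite words are functions nat -> nat. *)
From mathcomp Require Import all_boot.
Set Implicit Arguments. Unset Strict Implicit. Unset Printing Implicit Defensive.

Definition g (a : nat) : seq nat :=
  match a with
  | 0 => [:: 0; 1]
  | 1 => [:: 2; 0]
  | 2 => [:: 2; 3]
  | _ => [:: 0; 2]
  end.

Definition morph (h : nat -> seq nat) (w : seq nat) : seq nat := flatten (map h w).

Definition g_iter (k : nat) : seq nat := iter k (morph g) [:: 0].

(* the fixed point g^omega(0): its n-th letter is the n-th letter of g^(n+1)(0),
   a prefix of length 2^(n+1) > n of the fixed point *)
Definition g_omega (n : nat) : nat := nth 0 (g_iter n.+1) n.

Definition tau (a : nat) : nat :=
  match a with 0 => 2 | 1 => 1 | 2 => 0 | _ => 1 end.

Definition vtm (n : nat) : nat := tau (g_omega n).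

Definition eta (a : nat) : seq nat :=
  match a with
  | 0 => [:: 0;0;0;1;1;1;0;1]
  | 1 => [:: 0;0;1;1;1;0;0;0;1;1;0;1]
  | _ => [:: 0;0;1;1;0;0;0;1;1;1;0;0;1;1;0;1]
  end.

Definition pref (x : nat -> nat) (n : nat) : seq nat := mkseq x n.

(* the infinite word eta(x) for an infinite word x over {0,1,2}: the n-th
   letter is read off eta applied to the prefix of length n+1 of x
   (that image has length >= 8(n+1) > n since all eta-images are nonempty). *)
Definition morph_inf (h : nat -> seq nat) (x : nat -> nat) (n : nat) : nat :=
  nth 0 (morph h (pref x n.+1)) n.

Definition eta_vtm : nat -> nat := morph_inf eta vtm.

Definition occurs (u : seq nat) (x : nat -> nat) : Prop :=
  exists i : nat, forall j : nat, j < size u -> x (i + j) = nth 0 u j.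

Definition square_factor (u : seq nat) (x : nat -> nat) : Prop :=
  0 < size u /\ occurs (u ++ u) x.

Fixpoint bin_lsd_aux (fuel n : nat) : seq bool :=
  match fuel with
  | 0 => [::]
  | fuel'.+1 => if n == 0 then [::] else odd n :: bin_lsd_aux fuel' n./2
  end.

(* base-2 representation, most significant digit first (canonical, no
   leading zeros; 0 is represented by the empty word) *)
Definition bin_msd (n : nat) : seq bool := rev (bin_lsd_aux n n).

Record DFAO2 (s : nat) := {
  dfao_init : 'I_s;
  dfao_delta : 'I_s -> bool -> 'I_s;
  dfao_out : 'I_s -> nat
}.

Definition dfao_eval s (A : DFAO2 s) (w : seq bool) : nat :=
  dfao_out A (foldl (dfao_delta A) (dfao_init A) w).

Definition generates s (A : DFAO2 s) (x : nat -> nat) : Prop :=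
  forall n, dfao_eval A (bin_msd n) = x n.

(* Write y = g^omega(0) and cut eta(vtm) into the blocks eta(tau(y_k)), of lengths 16, 12, 8, 12
   for y_k = 0, 1, 2, 3.  Doubling k nearly doubles the start of block k:
   start(2k) = 2 start(k) - s(y_k) with s(a) in {0, 4}.  Hence the triple (y_k, y_(k+1), offset)
   attached to a position n determines the one attached to 2n + b, which yields a 2-automaton
   for eta(vtm); it minimises to 27 states.

   A square of period d >= 3 in the output of this automaton gives relations between the states
   at distance d: one relation for the first pair, one for the inner pairs, one for the last pair.
   For even d, the states at the parent positions n/2 satisfy a system of the same shape for
   d/2, obtained by pulling the relations back along the transitions; starting from "same
   output", only 51 systems arise.  Odd periods d >= 11 are impossible, because the inner
   relation of each system never links a window of 9 states at an even position to one at an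
   odd position, and the periods 3 to 10 are excluded by inspecting all windows of 22
   consecutive states.  The squares of period 1 and 2 are read off the factors of length 4. *)

From mathcomp Require Import all_boot zify.
Set Implicit Arguments. Unset Strict Implicit. Unset Printing Implicit Defensive.

(** * Automata and finite exploration *)

Lemma nat_half_ind (P : nat -> Prop) :
  P 0 -> (forall n, 0 < n -> P n./2 -> P n) -> forall n, P n.
Proof.
move=> P0 IH n; elim: n {-2}n (leqnn n) => [|N IHN] n le_nN; first by have -> : n = 0 by lia.
case: (posnP n) => [-> // | n_gt0]; apply: IH => //; apply: IHN; rewrite -divn2; lia.
Qed.

Lemma bin_lsd_aux_fuel f f' n : n <= f -> n <= f' -> bin_lsd_aux f n = bin_lsd_aux f' n.
Proof.
elim: f f' n => [|f IHf] [|f'] n //= le_nf le_nf'.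
- by move: le_nf; rewrite leqn0 => /eqP ->.
- by move: le_nf'; rewrite leqn0 => /eqP ->.
- by case: eqP => // /eqP n_neq0; congr cons; apply: IHf; rewrite -divn2; lia.
Qed.

Lemma bin_msd_half n : 0 < n -> bin_msd n = rcons (bin_msd n./2) (odd n).
Proof.
case: n => [|m] // _; rewrite /bin_msd /= rev_cons.
by congr (rcons (rev _) _); apply: bin_lsd_aux_fuel; rewrite ?uphalf_half -?divn2; lia.
Qed.

Section BinaryRun.

Variables (T : Type) (delta : T -> bool -> T) (q0 : T).

Definition run (n : nat) : T := foldl delta q0 (bin_msd n).

Lemma run_half n : delta q0 false = q0 -> run n = delta (run n./2) (odd n).
Proof.
move=> delta_q0; case: (posnP n) => [-> // | n_gt0].
by rewrite /run bin_msd_half // foldl_rcons.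
Qed.

End BinaryRun.

(* [n] only bounds the number of rounds; closedness of the result is checked separately. *)
Fixpoint explore (T : eqType) (next : T -> seq T) (n : nat) (seen frontier : seq T) : seq T :=
  if n is n'.+1 then
    let fresh := undup [seq y <- flatten (map next frontier) | y \notin seen] in
    explore next n' (seen ++ fresh) fresh
  else seen.

Lemma explore_seen (T : eqType) (next : T -> seq T) n seen frontier :
  {subset seen <= explore next n seen frontier}.
Proof.
elim: n seen frontier => [|n IHn] seen frontier x x_in //=.
by apply: IHn; rewrite mem_cat x_in.
Qed.

Definition closed_under (T : eqType) (next : T -> seq T) (F : seq T) : bool :=
  all (fun x => all (fun y => y \in F) (next x)) F.

Lemma closed_underP (T : eqType) (next : T -> seq T) F x y :
  closed_under next F -> x \in F -> y \in next x -> y \in F.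
Proof. by move=> /allP closed_F /closed_F /allP; apply. Qed.

(** * Chains of relations along a square *)

Definition relmx := seq (seq bool).

Definition related (R : relmx) (a b : nat) : bool := nth false (nth [::] R a) b.

Definition chain_rels := (relmx * relmx * relmx * nat)%type.

(* A square of period d is a chain with A = E = B relating states of equal output and excess
   e = 0.  The first and the last pair carry their own relations because, once the period is
   halved, the boundary positions have only one child inside the square. *)
Definition chainb (c : chain_rels) (d : nat) (s : nat -> nat) : bool :=
  let: (A, E, B, e) := c in
  [&& related A (s 0) (s d),
      all (fun j => related E (s j) (s (j + d))) (iota 1 (d + e - 2))
    & related B (s (d + e - 1)) (s (d + e - 1 + d))].

Lemma eq_chainb (c : chain_rels) d s s' : 0 < d -> {in gtn (2 * d + c.2), s =1 s'} ->
  chainb c d s = chainb c d s'.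
Proof.
case: c => [[[A E] B] e] /= d_gt0 eq_s.
rewrite !eq_s ?inE; try lia; congr andb; congr andb.
by apply: eq_in_all => j; rewrite mem_iota => j_lt; rewrite !eq_s ?inE; lia.
Qed.

Section Windows.

Variable delta : nat -> bool -> nat.
Hypothesis delta_0 : delta 0 false = 0.

Local Notation z := (run delta 0).

Definition window (W x : nat) : seq nat := mkseq (fun j => z (x + j)) W.

Definition window_child (W : nat) (u : seq nat) (b : bool) : seq nat :=
  mkseq (fun j => delta (nth 0 u (b + j)./2) (odd (b + j))) W.

Definition window_next (W : nat) (u : seq nat) : seq (seq nat) :=
  [:: window_child W u false; window_child W u true].

Lemma window_half W x : window W x = window_child W (window W x./2) (odd x).
Proof.
apply: (@eq_from_nth _ 0); rewrite ?size_mkseq // => j lt_j.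
rewrite !nth_mkseq //; last by rewrite -divn2; case: (odd x); lia.
rewrite run_half // -[x in LHS]odd_double_half addnAC halfD odd_double andbF add0n doubleK.
by rewrite oddD odd_double addbF addnC.
Qed.

Lemma window_mem W F x : window W 0 \in F -> closed_under (window_next W) F -> window W x \in F.
Proof.
move=> w0_in closed_F; elim/nat_half_ind: x => [|x _ IHx] //.
by rewrite window_half; apply: (closed_underP closed_F IHx); case: (odd x); rewrite !inE eqxx ?orbT.
Qed.

Lemma window_parity_mem W F x : window W 0 \in F -> closed_under (window_next W) F ->
  window W x \in map (fun u => window_child W u (odd x)) F.
Proof.
move=> w0_in closed_F; rewrite window_half.
exact: (map_f (fun u => window_child W u (odd x)) (window_mem _ w0_in closed_F)).
Qed.

Lemma chainb_window (c : chain_rels) d W m : 0 < d -> 2 * d + c.2 <= W ->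
  chainb c d (fun j => z (m + j)) = chainb c d (nth 0 (window W m)).
Proof.
by move=> d_gt0 le_W; apply: eq_chainb => // j; rewrite inE => lt_j; rewrite nth_mkseq //; lia.
Qed.

Lemma chainb_windows_related A E B e m d W : W.+1 < d ->
  chainb (A, E, B, e) d (fun j => z (m + j)) ->
  all2 (related E) (window W m.+1) (window W (m.+1 + d)).
Proof.
move=> lt_Wd /and3P [_ /allP chainE _].
have all2_map (f f' : nat -> nat) s :
    all2 (related E) (map f s) (map f' s) = all (fun j => related E (f j) (f' j)) s.
  by elim: s => //= j s ->.
rewrite all2_map; apply/allP => j; rewrite mem_iota => /andP [_ lt_j].
have -> : m.+1 + j = m + j.+1 by lia.
have -> : m.+1 + d + j = m + (j.+1 + d) by lia.
by apply: chainE; rewrite mem_iota; lia.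
Qed.

End Windows.

Section ChainDescent.

Variables (N : nat) (delta : nat -> bool -> nat).
Hypothesis delta_lt : forall q b, q < N -> delta q b < N.
Hypothesis delta_0 : delta 0 false = 0.
Hypothesis N_gt0 : 0 < N.

Local Notation z := (run delta 0).

Lemma run_lt n : z n < N.
Proof. by elim/nat_half_ind: n => [|n _ IHn] //; rewrite run_half // delta_lt. Qed.

Lemma run_child m (b : bool) : z (2 * m + b) = delta (z m) b.
Proof.
by rewrite run_half // addnC mul2n half_bit_double oddD oddb odd_double addbF.
Qed.

Definition relmx_of (P : nat -> nat -> bool) : relmx := mkseq (fun a => mkseq (P a) N) N.

Lemma related_of P a b : a < N -> b < N -> related (relmx_of P) a b = P a b.
Proof. by move=> lt_a lt_b; rewrite /related !nth_mkseq. Qed.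

Definition total_rel : relmx := relmx_of (fun _ _ => true).

Definition pre (R0 R1 : relmx) : relmx :=
  mkseq (fun a =>
    let row0 := nth [::] R0 (delta a false) in let row1 := nth [::] R1 (delta a true) in
    mkseq (fun b => nth false row0 (delta b false) && nth false row1 (delta b true)) N) N.

Lemma related_total m n : related total_rel (z m) (z n).
Proof. by rewrite related_of ?run_lt. Qed.

Lemma related_pre R0 R1 m n : related (pre R0 R1) (z m) (z n) =
  related R0 (z (2 * m)) (z (2 * n)) && related R1 (z (2 * m).+1) (z (2 * n).+1).
Proof.
rewrite /related /pre !nth_mkseq ?run_lt //.
by rewrite -!(run_child _ false) -!(run_child _ true) !addn0 !addn1.
Qed.

(* The positions m .. m + 2d + e - 1 have the parents m/2 .. m/2 + d + x/2 - 1, and the last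
   parent has both children among them iff x is odd. *)
Definition chain_rels_half (c : chain_rels) (p : bool) : chain_rels :=
  let: (A, E, B, e) := c in
  let x := p + e + 1 in
  (if p then pre total_rel A else pre A E, pre E E,
   if odd x then pre E B else pre B total_rel, x./2).

Lemma chainb_half c m d : 2 <= d ->
  chainb c (2 * d) (fun j => z (m + j)) ->
  chainb (chain_rels_half c (odd m)) d (fun j => z (m./2 + j)).
Proof.
case: c => [[[A E] B] e] le2d /and3P [chainA /allP chainE chainB].
move: (odd_double_half m) (odd_double_half (odd m + e + 1)); rewrite /chain_rels_half.
generalize (odd m) (m./2) => p m'; generalize (odd (p + e + 1)) ((p + e + 1)./2) => r e'.
rewrite -!mul2n => em ex.
have relE i1 i2 j : 0 < j -> j < 2 * d + e - 1 -> i1 = m + j -> i2 = m + (j + 2 * d) ->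
    related E (z i1) (z i2).
  by move=> j_gt0 lt_j -> ->; apply: chainE; rewrite mem_iota; lia.
have relA i1 i2 : i1 = m -> i2 = m + 2 * d -> related A (z i1) (z i2).
  by move=> -> ->; rewrite addn0 in chainA.
have relB i1 i2 : i1 = m + (2 * d + e - 1) -> i2 = m + (2 * d + e - 1 + 2 * d) ->
    related B (z i1) (z i2) by move=> -> ->.
apply/and3P; split.
- case: p em ex => em ex /=; rewrite related_pre ?related_total ?andbT.
    by apply: relA; lia.
  by apply/andP; split; [apply: relA | apply: (relE _ _ 1)]; lia.
- apply/allP => j; rewrite mem_iota related_pre => /andP [j_ge1 j_lt].
  by apply/andP; split; [apply: (relE _ _ (2 * j - p)) | apply: (relE _ _ (2 * j + 1 - p))]; lia.
- case: r ex => ex /=; rewrite related_pre ?related_total ?andbT.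
    by apply/andP; split; [apply: (relE _ _ (2 * d + e - 2)) | apply: relB]; lia.
  by apply: relB; lia.
Qed.

Definition chain_rels_next (c : chain_rels) : seq chain_rels :=
  [:: chain_rels_half c false; chain_rels_half c true].

Lemma no_chainb (C : seq chain_rels) (d0 : nat) : 5 <= d0 -> closed_under chain_rels_next C ->
    (forall (c : chain_rels) m d, c \in C -> 3 <= d < d0 -> ~~ chainb c d (fun j => z (m + j))) ->
    (forall (c : chain_rels) m d, c \in C -> d0 <= d -> odd d ->
       ~~ chainb c d (fun j => z (m + j))) ->
  forall (c : chain_rels) m d, c \in C -> 3 <= d -> ~~ chainb c d (fun j => z (m + j)).
Proof.
move=> d0_ge5 closed_C short odd_long c m d.
elim: d {-2}d (leqnn d) c m => [|D IHD] d le_dD c m c_in d_ge3; first lia.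
case: (ltnP d d0) => [lt_d | ge_d]; first by apply: short => //; apply/andP.
case: (boolP (odd d)) => [odd_d | even_d]; first exact: odd_long.
have -> : d = 2 * d./2 by move: (odd_double_half d); rewrite (negbTE even_d) mul2n.
have half_in : chain_rels_half c (odd m) \in C.
  by apply: (closed_underP closed_C c_in); case: (odd m); rewrite !inE eqxx ?orbT.
have half_ge3 : 3 <= d./2 by rewrite -divn2; lia.
apply/negP => /(chainb_half (ltnW half_ge3)).
by apply/negP/IHD => //; rewrite -divn2; lia.
Qed.

End ChainDescent.

(** * The fixed point of g and the blocks of eta(vtm) *)

Lemma morph_cat (h : nat -> seq nat) s1 s2 :
  morph h (s1 ++ s2) = morph h s1 ++ morph h s2.
Proof. by rewrite /morph map_cat flatten_cat. Qed.

Lemma morph_rcons (h : nat -> seq nat) s a : morph h (rcons s a) = morph h s ++ h a.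
Proof. by rewrite /morph map_rcons flatten_rcons. Qed.

Section UniformMorphism.

Variables (h : nat -> seq nat) (k : nat).
Hypothesis size_h : forall a, size (h a) = k.

Lemma size_morph_uniform s : size (morph h s) = k * size s.
Proof.
elim: s => [|a s IHs]; first by rewrite muln0.
by rewrite /morph /= size_cat size_h -/(morph h s) IHs mulnS.
Qed.

Lemma nth_morph_uniform s i c : i < size s -> c < k ->
  nth 0 (morph h s) (k * i + c) = nth 0 (h (nth 0 s i)) c.
Proof.
elim: s i => [|a s IHs] [|i] //= lt_i lt_c; rewrite /morph /= -/(morph h s) nth_cat size_h.
  by rewrite muln0 add0n lt_c.
by rewrite mulnS -addnA ltnNge leq_addr /= addKn IHs.
Qed.

End UniformMorphism.

Lemma size_g a : size (g a) = 2.
Proof. by case: a => [|[|[|]]]. Qed.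

Lemma g_iterS j : g_iter j.+1 = morph g (g_iter j).
Proof. by []. Qed.

Lemma size_g_iter j : size (g_iter j) = 2 ^ j.
Proof.
by elim: j => [|j IHj] //; rewrite g_iterS (size_morph_uniform size_g) IHj expnS.
Qed.

Lemma g_iter_prefix j : exists r, g_iter j.+1 = g_iter j ++ r.
Proof.
elim: j => [|j [r IHj]]; first by exists [:: 1].
by exists (morph g r); rewrite [LHS]g_iterS [in LHS]IHj morph_cat.
Qed.

Lemma nth_g_iter_stable j J n : j <= J -> n < 2 ^ j ->
  nth 0 (g_iter J) n = nth 0 (g_iter j) n.
Proof.
move=> le_jJ lt_n; elim: J le_jJ => [|J IHJ]; first by rewrite leqn0 => /eqP ->.
rewrite leq_eqVlt => /orP [/eqP -> // | lt_jJ].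
have [r ->] := g_iter_prefix J.
by rewrite nth_cat size_g_iter (leq_trans lt_n (leq_pexp2l _ (ltnSE lt_jJ))) // IHJ.
Qed.

Lemma g_omegaE j n : n < 2 ^ j -> g_omega n = nth 0 (g_iter j) n.
Proof.
move=> lt_n; rewrite /g_omega.
have lt_n1 : n < 2 ^ n.+1 by rewrite (leq_trans (ltn_expl n (isT : 1 < 2))) ?leq_pexp2l.
case: (leqP j n.+1) => ?; first by rewrite (nth_g_iter_stable _ lt_n).
by rewrite (nth_g_iter_stable _ lt_n1) // ltnW.
Qed.

Lemma g_omega_half n : g_omega n = nth 0 (g (g_omega n./2)) (odd n).
Proof.
have lt_n : n < 2 ^ n := ltn_expl n (isT : 1 < 2).
have lt_half : n./2 < 2 ^ n by rewrite ltn_half_double -muln2; lia.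
rewrite (g_omegaE lt_half) (@g_omegaE n.+1 n); last by rewrite expnS; lia.
rewrite g_iterS -(nth_morph_uniform size_g); last by case: (odd n).
  by rewrite mul2n addnC odd_double_half.
by rewrite size_g_iter.
Qed.

Lemma g_omega_even k : g_omega (2 * k) = nth 0 (g (g_omega k)) 0.
Proof. by rewrite g_omega_half mul2n doubleK odd_double. Qed.

Lemma g_omega_odd k : g_omega (2 * k).+1 = nth 0 (g (g_omega k)) 1.
Proof. by rewrite g_omega_half /= mul2n uphalf_double odd_double. Qed.

Definition g_factors2 : seq (nat * nat) :=
  [:: (0, 1); (0, 2); (1, 2); (2, 0); (2, 3); (3, 0)].

Lemma g_omega_factor2 k : (g_omega k, g_omega k.+1) \in g_factors2.
Proof.
have factors2_closed : all (fun p =>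
    [&& (nth 0 (g p.1) 0, nth 0 (g p.1) 1) \in g_factors2
      & (nth 0 (g p.1) 1, nth 0 (g p.2) 0) \in g_factors2]) g_factors2 by [].
elim/nat_half_ind: k => [|k _ IHk]; first by [].
rewrite (g_omega_half k) (g_omega_half k.+1) /= uphalf_half.
have /andP [inner border] := allP factors2_closed _ IHk.
by case: (odd k).
Qed.

Definition block_len (a : nat) : nat := size (eta (tau a)).

Definition block_start (k : nat) : nat := size (morph eta (pref vtm k)).

Lemma block_len_gt0 a : 0 < block_len a.
Proof. by case: a => [|[|[|]]]. Qed.

Lemma block_startS k : block_start k.+1 = block_start k + block_len (g_omega k).
Proof. by rewrite /block_start /pref mkseqS morph_rcons size_cat. Qed.

Lemma block_start_mono : {homo block_start : k l / k <= l}.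
Proof.
move=> k l /subnK <-; elim: (l - k) => [|i IHi] //.
by rewrite addSn block_startS (leq_trans IHi) ?leq_addr.
Qed.

Lemma block_start_ge k : k <= block_start k.
Proof.
elim: k => [|k IHk] //; rewrite block_startS.
by rewrite -addn1 leq_add ?block_len_gt0.
Qed.

Lemma nth_morph_eta_pref N k o : k < N -> o < block_len (g_omega k) ->
  nth 0 (morph eta (pref vtm N)) (block_start k + o) = nth 0 (eta (tau (g_omega k))) o.
Proof.
move=> + lt_o; elim: N => [|N IHN] //; rewrite ltnS leq_eqVlt => /orP [/eqP -> | lt_kN].
  rewrite /pref mkseqS morph_rcons nth_cat -/(pref vtm N) -/(block_start N).
  by rewrite ltnNge leq_addr addKn.
have lt_start : block_start k + o < block_start N.
  by rewrite (leq_trans _ (block_start_mono lt_kN)) // block_startS ltn_add2l.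
by rewrite /pref mkseqS morph_rcons nth_cat -/(pref vtm N) -/(block_start N) lt_start IHN.
Qed.

Lemma eta_vtm_block k o : o < block_len (g_omega k) ->
  eta_vtm (block_start k + o) = nth 0 (eta (tau (g_omega k))) o.
Proof.
move=> lt_o; apply: nth_morph_eta_pref => //.
by rewrite ltnS (leq_trans (block_start_ge k)) ?leq_addr.
Qed.

Definition block_shift (a : nat) : nat := if a \in [:: 1; 2] then 4 else 0.

Lemma block_start_double k :
  block_start (2 * k) + block_shift (g_omega k) = 2 * block_start k.
Proof.
have shift_closed : all (fun p =>
    block_len (nth 0 (g p.1) 0) + block_len (nth 0 (g p.1) 1) + block_shift p.2
    == block_shift p.1 + 2 * block_len p.1) g_factors2 by [].
elim: k => [|k IHk]; first by [].
have /eqP /= shift_k := allP shift_closed _ (g_omega_factor2 k).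
have -> : 2 * k.+1 = (2 * k).+2 by lia.
rewrite !block_startS g_omega_odd g_omega_even; lia.
Qed.

(** * A 27-state automaton generating eta(vtm) *)

Definition delta27 (q : nat) (b : bool) : nat :=
  nth 0 (if b then
    [:: 1; 3; 5; 7; 9; 11; 7; 14; 16; 18; 19; 5; 7; 16; 18; 21; 23; 1; 3; 7; 5; 25; 14; 26; 9;
        14; 23]
  else
    [:: 0; 2; 4; 6; 8; 10; 12; 13; 15; 17; 2; 4; 12; 15; 0; 20; 22; 0; 2; 6; 24; 6; 8; 15; 8;
        13; 22])
  q.

Definition out27 (q : nat) : nat :=
  nth 0 [:: 0; 0; 1; 1; 0; 0; 0; 1; 1; 1; 0; 0; 1; 0; 1; 0; 0; 1; 1; 0; 1; 1; 0; 1; 1; 0; 1] q.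

Lemma delta27_lt q b : q < 27 -> delta27 q b < 27.
Proof.
move=> lt_q; have : all (fun q => (delta27 q false < 27) && (delta27 q true < 27)) (iota 0 27).
  by [].
by move/allP/(_ q); rewrite mem_iota => /(_ lt_q) /andP []; case: b.
Qed.

Lemma delta27_0 : delta27 0 false = 0.
Proof. by []. Qed.

Local Notation z := (run delta27 0).

Lemma z_half n : z n = delta27 (z n./2) (odd n).
Proof. exact: (run_half _ delta27_0). Qed.

Definition block_pos := (nat * nat * nat)%type.

(* If n = block_start k + o, then 2n + b = block_start (2k) + block_shift a + 2o + b, and the
   blocks 2k, 2k + 1, 2k + 2 carry the letters (g a)_0, (g a)_1, (g a')_0. *)
Definition block_step (t : block_pos) (b : bool) : block_pos :=
  let: (a, a', o) := t in
  let o2 := block_shift a + 2 * o + b in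
  let c0 := nth 0 (g a) 0 in let c1 := nth 0 (g a) 1 in
  let c2 := nth 0 (g a') 0 in let c3 := nth 0 (g a') 1 in
  if o2 < block_len c0 then (c0, c1, o2)
  else if o2 - block_len c0 < block_len c1 then (c1, c2, o2 - block_len c0)
  else (c2, c3, o2 - block_len c0 - block_len c1).

Definition block_positions : seq block_pos :=
  [:: (0,1,0); (0,1,1); (0,1,2); (0,1,3); (0,1,4); (0,1,5); (0,1,6); (0,1,7); (0,1,8); (0,1,9);
      (0,1,10); (0,1,11); (0,1,12); (0,1,13); (0,1,14); (0,1,15);
      (1,2,0); (1,2,1); (1,2,2); (1,2,3); (1,2,4); (1,2,5); (1,2,6); (1,2,7); (1,2,8); (1,2,9);
      (1,2,10); (1,2,11);
      (2,0,0); (2,0,1); (2,0,2); (2,0,3); (2,0,4); (2,0,5); (2,0,6); (2,0,7);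
      (0,2,0); (0,2,1); (0,2,2); (0,2,3); (0,2,4); (0,2,5); (0,2,6); (0,2,7); (0,2,8); (0,2,9);
      (0,2,10); (0,2,11); (0,2,12); (0,2,13); (0,2,14); (0,2,15);
      (2,3,0); (2,3,1); (2,3,2); (2,3,3); (2,3,4); (2,3,5); (2,3,6); (2,3,7);
      (3,0,0); (3,0,1); (3,0,2); (3,0,3); (3,0,4); (3,0,5); (3,0,6); (3,0,7); (3,0,8); (3,0,9);
      (3,0,10); (3,0,11)].

(* [delta27] is the minimal automaton of [block_step] started at (0, 1, 0); [block_class] maps
   each reachable block position to its state. *)
Definition block_class (t : block_pos) : nat :=
  nth 0 [:: 0; 1; 2; 3; 4; 5; 6; 7; 8; 9; 10; 11; 12; 7; 13; 14;
            15; 16; 17; 18; 2; 19; 4; 5; 12; 7; 13; 14;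
            15; 16; 0; 18; 20; 21; 22; 23;
            0; 1; 2; 3; 4; 5; 6; 7; 8; 9; 10; 11; 12; 7; 13; 14;
            15; 16; 0; 18; 20; 21; 22; 23;
            0; 1; 2; 3; 24; 5; 6; 25; 8; 14; 15; 26]
    (index t block_positions).

Lemma block_positions_ok : all (fun t : block_pos => let: (a, _, o) := t in
  [&& o < block_len a, out27 (block_class t) == nth 0 (eta (tau a)) o
    & all (fun b => (block_step t b \in block_positions)
                    && (block_class (block_step t b) == delta27 (block_class t) b))
          [:: false; true]]) block_positions.
Proof. by []. Qed.

Definition describes (n : nat) (t : block_pos) : Prop :=
  let: (a, a', o) := t in
  exists k, [/\ g_omega k = a, g_omega k.+1 = a', n = block_start k + o & o < block_len a].

Lemma describes_step n t (b : bool) : describes n t ->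
  block_step t b \in block_positions -> describes (2 * n + b) (block_step t b).
Proof.
case: t => [[a a'] o] [k [y_k y_k1 -> lt_o]].
have shift_k := block_start_double k; rewrite y_k in shift_k.
have y0 : g_omega (2 * k) = nth 0 (g a) 0 by rewrite g_omega_even y_k.
have y1 : g_omega (2 * k).+1 = nth 0 (g a) 1 by rewrite g_omega_odd y_k.
have y2 : g_omega (2 * k).+2 = nth 0 (g a') 0 by rewrite -y_k1 -g_omega_even mulnS.
have y3 : g_omega (2 * k).+3 = nth 0 (g a') 1 by rewrite -y_k1 -g_omega_odd mulnS.
have start1 := block_startS (2 * k); rewrite y0 in start1.
have start2 := block_startS (2 * k).+1; rewrite y1 start1 in start2.
rewrite /block_step /=; case: ifP => [lt0 _ | ge0].
  by exists (2 * k); split => //; lia.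
case: ifP => [lt1 _ | ge1 in_step].
  by exists (2 * k).+1; split => //; lia.
have /and3P [lt2 _ _] := allP block_positions_ok _ in_step.
by exists (2 * k).+2; split => //; lia.
Qed.

Lemma describes_z n :
  exists2 t, t \in block_positions & describes n t /\ block_class t = z n.
Proof.
elim/nat_half_ind: n => [|n _ [t in_t [descr_t class_t]]].
  by exists (0, 1, 0) => //; split => //; exists 0.
have /andP [in_step /eqP class_step] : (block_step t (odd n) \in block_positions)
    && (block_class (block_step t (odd n)) == delta27 (block_class t) (odd n)).
  case: t in_t {descr_t class_t} => [[a a'] o] in_t.
  have /and3P [_ _ /allP step] := allP block_positions_ok _ in_t.
  by apply: step; case: (odd n).
exists (block_step t (odd n)) => //; split; last by rewrite class_step class_t -z_half.
by rewrite -{1}(odd_double_half n) addnC -mul2n; apply: describes_step.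
Qed.

Lemma eta_vtm_z n : eta_vtm n = out27 (z n).
Proof.
have [[[a a'] o] in_t [[k [y_k _ -> lt_o]] <-]] := describes_z n.
have /and3P [_ /eqP out_t _] := allP block_positions_ok _ in_t.
by rewrite out_t eta_vtm_block y_k.
Qed.

Definition A27 : DFAO2 27 :=
  {| dfao_init := inord 0; dfao_delta := fun q b => inord (delta27 q b); dfao_out := out27 |}.

Lemma A27_generates : generates A27 eta_vtm.
Proof.
move=> n; rewrite eta_vtm_z /dfao_eval /run /=.
have run_val (q : 'I_27) w : val (foldl (dfao_delta A27) q w) = foldl delta27 q w.
  by elim: w q => [|b w IHw] q //=; rewrite IHw /= inordK ?delta27_lt.
by rewrite run_val inordK.
Qed.

(** * The squares of eta(vtm) *)

Definition windows27 (W : nat) : seq (seq nat) :=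
  explore (window_next delta27 W) 10 [:: window delta27 W 0] [:: window delta27 W 0].

Lemma windows27_closed :
  all (fun W => closed_under (window_next delta27 W) (windows27 W)) [:: 4; 9; 22].
Proof. by vm_compute. Qed.

Lemma window27_0_mem W : window delta27 W 0 \in windows27 W.
Proof. by rewrite /windows27; apply: explore_seen; rewrite mem_head. Qed.

Lemma window27_mem W x : W \in [:: 4; 9; 22] -> window delta27 W x \in windows27 W.
Proof.
by move=> W_in; apply: window_mem => //; [exact: window27_0_mem | exact: (allP windows27_closed)].
Qed.

Lemma window27_parity_mem W x : W \in [:: 4; 9; 22] ->
  window delta27 W x \in [seq window_child delta27 W u (odd x) | u <- windows27 W].
Proof.
move=> W_in; apply: window_parity_mem => //; first exact: window27_0_mem.
exact: (allP windows27_closed).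
Qed.

Definition same_out : relmx := relmx_of 27 (fun a b => out27 a == out27 b).

Definition square_rels : chain_rels := (same_out, same_out, same_out, 0).

Definition chain_rels27 : seq chain_rels :=
  explore (chain_rels_next 27 delta27) 10 [:: square_rels] [:: square_rels].

Lemma chain_rels27_closed : closed_under (chain_rels_next 27 delta27) chain_rels27.
Proof. by vm_compute. Qed.

Lemma chain_rels27_short_periods :
  let F := windows27 22 in
  all (fun c => (c.2 <= 2) && all (fun d => all (fun u => ~~ chainb c d (nth 0 u)) F) (iota 3 8))
  chain_rels27.
Proof. by vm_compute. Qed.

Lemma chain_rels27_parity :
  let F0 := [seq window_child delta27 9 u false | u <- windows27 9] in
  let F1 := [seq window_child delta27 9 u true | u <- windows27 9] in
  all (fun c => let: (_, E, _, _) := c in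
    all (fun u => all (fun v => ~~ all2 (related E) u v && ~~ all2 (related E) v u) F1) F0)
  chain_rels27.
Proof. by vm_compute. Qed.

Lemma z_lt n : z n < 27.
Proof. exact: (run_lt delta27_lt). Qed.

Lemma chainb_square m d : 0 < d ->
  (forall j, j < d -> eta_vtm (m + j) = eta_vtm (m + j + d)) ->
  chainb square_rels d (fun j => z (m + j)).
Proof.
move=> d_gt0 square.
have same i1 i2 j : j < d -> i1 = m + j -> i2 = m + (j + d) -> related same_out (z i1) (z i2).
  by move=> lt_j -> ->; rewrite related_of ?z_lt //= -!eta_vtm_z addnA square.
apply/and3P; split; first by apply: (same _ _ 0); lia.
  by apply/allP => j; rewrite mem_iota => /andP [_ lt_j]; apply: (same _ _ j); lia.
by apply: (same _ _ d.-1); lia.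
Qed.

Lemma square_rels_mem : square_rels \in chain_rels27.
Proof. by rewrite /chain_rels27; apply: explore_seen; rewrite mem_head. Qed.

Lemma no_chainb_short (c : chain_rels) m d : c \in chain_rels27 -> 3 <= d < 11 ->
  ~~ chainb c d (fun j => z (m + j)).
Proof.
move=> c_in /andP [d_ge3 lt_d].
have /andP [e_le2 /allP short] := allP chain_rels27_short_periods c c_in.
rewrite (chainb_window delta27_0 (W := 22)); try lia.
by apply: (allP (short d _)); [rewrite mem_iota; lia | exact: window27_mem].
Qed.

Lemma no_chainb_odd_long (c : chain_rels) m d : c \in chain_rels27 -> 11 <= d -> odd d ->
  ~~ chainb c d (fun j => z (m + j)).
Proof.
case: c => [[[A E] B] e] c_in ge_d odd_d; apply/negP.
have lt_9d : 9.+1 < d by lia.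
move=> /(chainb_windows_related delta27_0 lt_9d) rel_windows.
have /allP parity := allP chain_rels27_parity _ c_in.
have in_m1 := @window27_parity_mem 9 m.+1 isT.
have := @window27_parity_mem 9 (m.+1 + d) isT; rewrite oddD odd_d addbT.
case: (odd m.+1) in_m1 => in_m1 in_m1d.
  by have /allP /(_ _ in_m1) /andP [_] := parity _ in_m1d; rewrite rel_windows.
by have /allP /(_ _ in_m1d) /andP [] := parity _ in_m1; rewrite rel_windows.
Qed.

Lemma no_long_square m d : 3 <= d ->
  ~ (forall j, j < d -> eta_vtm (m + j) = eta_vtm (m + j + d)).
Proof.
move=> d_ge3 /(chainb_square (ltnW (ltnW d_ge3))); apply/negP.
exact: (no_chainb delta27_lt delta27_0 isT (isT : 4 < 11) chain_rels27_closed
          no_chainb_short no_chainb_odd_long m square_rels_mem d_ge3).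
Qed.

Definition factors4 : seq (seq nat) :=
  [:: [:: 0; 0; 0; 1]; [:: 0; 0; 1; 1]; [:: 0; 1; 0; 0]; [:: 0; 1; 1; 0]; [:: 0; 1; 1; 1];
      [:: 1; 0; 0; 0]; [:: 1; 0; 0; 1]; [:: 1; 0; 1; 0]; [:: 1; 1; 0; 0]; [:: 1; 1; 0; 1];
      [:: 1; 1; 1; 0]].

Lemma eta_vtm_factor4 i :
  [:: eta_vtm i; eta_vtm (i + 1); eta_vtm (i + 2); eta_vtm (i + 3)] \in factors4.
Proof.
have windows_ok : all (fun u => map out27 u \in factors4) (windows27 4) by vm_compute.
have := allP windows_ok _ (@window27_mem 4 i isT).
by rewrite /= !eta_vtm_z addn0.
Qed.

Lemma occurs_square (x : nat -> nat) u : occurs (u ++ u) x ->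
  exists i, forall j, j < size u -> x (i + j) = nth 0 u j /\ x (i + j + size u) = nth 0 u j.
Proof.
case=> i occ; exists i => j lt_j; rewrite -addnA !occ ?size_cat ?nth_cat ?lt_j; try lia.
by rewrite ltnNge leq_addl /= addnK.
Qed.

Lemma short_square_factor u : 0 < size u < 3 -> occurs (u ++ u) eta_vtm ->
  u \in [:: [:: 0]; [:: 1]; [:: 1; 0]].
Proof.
pose S := [:: [:: 0]; [:: 1]; [:: 1; 0]].
have squares_ok : all (fun w =>
    ((nth 0 w 0 == nth 0 w 1) ==> ([:: nth 0 w 0] \in S))
    && ((nth 0 w 0 == nth 0 w 2) && (nth 0 w 1 == nth 0 w 3) ==> ([:: nth 0 w 0; nth 0 w 1] \in S)))
  factors4 by [].
move=> size_u /occurs_square [i occ].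
have /andP [] := allP squares_ok _ (eta_vtm_factor4 i).
case: u size_u occ => [|a [|b [|c u]]] //= _ occ.
- have [occ0 _] := occ 0 isT; have [_ occ1] := occ 0 isT.
  by rewrite /= addn0 in occ0 occ1; rewrite occ0 occ1 eqxx /= => ->.
- have [occ0 occ2] := occ 0 isT; have [occ1 occ3] := occ 1 isT.
  rewrite /= addn0 in occ0 occ2; rewrite /= -addnA in occ1 occ3.
  by rewrite occ0 occ1 occ2 occ3 !eqxx /= => _ ->.
Qed.

Theorem theorem5 :
  (forall u : seq nat,
      square_factor u eta_vtm <-> u \in [:: [:: 0]; [:: 1]; [:: 1; 0]])
  /\ exists A : DFAO2 27, generates A eta_vtm.
Proof.
split; last by exists A27; exact: A27_generates.
move=> u; split.
- case=> u_gt0 occ_uu; case: (ltnP (size u) 3) => [lt_u3 | ge_u3].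
    by apply: short_square_factor; rewrite ?u_gt0.
  have [i occ] := occurs_square occ_uu.
  by exfalso; apply: (no_long_square (m := i) ge_u3) => j /occ [-> ->].
- rewrite !inE => /or3P [] /eqP ->; split => //.
  + by exists 0; case=> [|[|j]] // _; vm_compute.
  + by exists 2; case=> [|[|j]] // _; vm_compute.
  + by exists 13; case=> [|[|[|[|j]]]] // _; vm_compute.
Qed.
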